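(* Let $(Y, S, A, \mathbf{X}^{P}, \mathbf{X}^{S})$ be jointly distributed random variables describing a unit drawn from an infinite population, where $Y$ is a real-valued outcome with $\mathbb{E}|Y|<\infty$, $S \in \{0,1\}$ is the survey inclusion indicator, $A \in \{1,\ldots,J\}$ is the area indicator, $\mathbf{X}^{P}$ (taking values in $\mathcal{X}^{P}$) are population covariates and $\mathbf{X}^{S}$ (taking values in $\mathcal{X}^{S}$) are survey-only covariates. Fix $j$ with $\Pr(A=j)>0$ and assume: (Sampling ignorability) $Y \perp\!\!\!\perp S \mid \mathbf{X}^{P}, A$ and $0 < \Pr(S=1 \mid \mathbf{X}^{P}, A) < 1$ for all $\mathbf{X}^{P}\in\mathcal{X}^{P}$; (Area ignorability) $Y \perp\!\!\!\perp A \mid \mathbf{X}^{P}, \mathbf{X}^{S}, S=1$ and $0 < \Pr(A=j \mid \mathbf{X}^{P}, \mathbf{X}^{S}, S=1) < 1$ for all $(\mathbf{X}^{P},\mathbf{X}^{S})\in\mathcal{X}^{P}\times\mathcal{X}^{S}$. Let $\pi_j(\mathbf{X}) = \Pr(S=1 \mid \mathbf{X}^{P}, A=j)$ and $p_j(\mathbf{X}) = \Pr(A=j \mid \mathbf{X}^{P}, \mathbf{X}^{S}, S=1)$. Then $\tau_j = \mathbb{E}[Y\mid A=j]$ satisfies $$\tau_j = \mathbb{E}\left\{ \frac{\mathbf{1}\{S=1, A=j\}}{\Pr(A=j)} \frac{Y}{\pi_j(\mathbf{X})}\, p_j(\mathbf{X}) \right\} + \mathbb{E}\left\{ \frac{\mathbf{1}\{S=1,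 A\neq j\}}{\Pr(A=j)} \frac{\Pr(A=j \mid \mathbf{X}^{P}, \mathbf{X}^{S}, S=1)}{\Pr(A\neq j \mid \mathbf{X}^{P}, \mathbf{X}^{S}, S=1)} \frac{Y}{\pi_j(\mathbf{X})} \,(1-p_j(\mathbf{X})) \right\}.$$
   Context: Notation: $\perp\!\!\!\perp$ denotes conditional independence; $\mathbf{1}\{\cdot\}$ is the indicator function; $\mathbf{X}$ is shorthand for the covariates $(\mathbf{X}^{P},\mathbf{X}^{S})$. The estimand for area $j$ is $\tau_j = \mathbb{E}[Y\mid A=j]$. *)

From HB Require Import structures.
From mathcomp Require Import all_boot all_order all_algebra.
From mathcomp Require Import all_classical all_reals all_analysis.
Set Implicit Arguments. Unset Strict Implicit. Unset Printing Implicit Defensive.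
Import Order.TTheory GRing.Theory Num.Theory.
Local Open Scope classical_set_scope.
Local Open Scope ring_scope.

(* [cond_prob_version P E W F g] : g is a (version of the) conditional
   probability Pr(F | W, E), i.e. of Pr(F | W) computed within the event E:
   g is measurable, g(W) is integrable on E, and for every measurable B,
   P(E /\ F /\ W in B) = E[ 1{E, W in B} g(W) ]. *)
Definition cond_prob_version {d dT : measure_display} {R : realType}
  {Omega : measurableType d} {T : measurableType dT}
  (P : probability Omega R) (E : set Omega) (W : Omega -> T)
  (F : set Omega) (g : T -> R) : Prop :=
  measurable_fun setT g /\
  P.-integrable E (fun w => (g (W w))%:E) /\
  forall B : set T, measurable B ->
    P (E `&` F `&` W @^-1` B) = (\int[P]_(w in E `&` W @^-1` B) (g (W w))%:E)%E.

Definition cond_indep {d dT : measure_display} {R : realType}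
  {Omega : measurableType d} {T : measurableType dT} {U V : Type}
  (P : probability Omega R) (E : set Omega) (W : Omega -> T)
  (Y : Omega -> U) (Z : Omega -> V) : Prop :=
  forall (C : set U) (D : set V),
    measurable (Y @^-1` C) -> measurable (Z @^-1` D) ->
    forall f g h : T -> R,
      cond_prob_version P E W (Y @^-1` C) f ->
      cond_prob_version P E W (Z @^-1` D) g ->
      cond_prob_version P E W (Y @^-1` C `&` Z @^-1` D) h ->
      {ae P, forall w, E w -> h (W w) = f (W w) * g (W w)}.

From HB Require Import structures.
From mathcomp Require Import all_boot all_order all_algebra.
From mathcomp Require Import all_classical all_reals all_analysis.
From mathcomp Require Import measurable_realfun ring.
Import Order.TTheory GRing.Theory Num.Theory.
Import HBNNSimple.
Local Open Scope classical_set_scope.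
Local Open Scope ring_scope.

(* The heart of the proof is the identity, for every nonnegative measurable u,
     E[1{S = 1} u(Y) p_j(X) / pi_j(X)] = E[1{A = j} u(Y)]        (ipw_identity)
   obtained from two applications of one consequence of conditional
   independence: if Y and F are independent given W within E and g is a
   version of Pr(F | W), then E[1{E, F} u(Y) phi(W)] = E[1{E} u(Y) phi(W) g(W)]. *)

(* The two steps behind the transfer principle for \int_D phi(V) rho: for a
   simple phi the integral is a finite sum over the image measure
   B |-> \int_(D /\ V in B) rho; a general phi is a monotone limit of simple
   functions. *)
Section density_transfer.
Context d (Omega : measurableType d) (R : realType)
  (mu : {measure set Omega -> \bar R})
  dT (T : measurableType dT) (V : Omega -> T) (mV : measurable_fun setT V)
  (D : set Omega) (mD : measurable D)
  (rho : Omega -> R) (mrho : measurable_fun setT rho)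
  (rho0 : forall x, 0 <= rho x).
Local Open Scope ereal_scope.

Let mrhoE : measurable_fun D (EFin \o rho).
Proof. exact/measurable_EFinP/measurable_funTS. Qed.

Lemma integral_nnsfun_comp (h : {nnsfun T >-> R}) :
  \int[mu]_(x in D) ((h (V x))%:E * (rho x)%:E) =
  (\sum_(y \in range h)
     (y%:E * \int[mu]_(x in D `&` V @^-1` (h @^-1` [set y])) (rho x)%:E)%E)%R.
Proof.
have mVh y : measurable_fun D (fun x => (\1_(h @^-1` [set y]) (V x) : R)).
  apply: measurableT_comp; [exact: measurable_indic | exact: measurable_funTS].
under eq_integral => x _.
  rewrite (fimfunE h (V x)) -fsumEFin; last exact: fimfunP.
  rewrite ge0_mule_fsuml; last by move=> y; exact: nnfun_muleindic_ge0.
  over.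
rewrite ge0_integral_fsum //; first last.
- move=> y x _; apply: mule_ge0; last by rewrite lee_fin.
  by rewrite EFinM nnfun_muleindic_ge0.
- move=> y; apply: emeasurable_funM => //.
  by apply/measurable_EFinP; exact: measurable_funM.
apply: eq_fsbigr => y /[!inE] -[t _ <-].
under eq_integral do rewrite EFinM -muleA.
rewrite ge0_integralZl //; first last.
- by rewrite lee_fin.
- by move=> x _; rewrite mule_ge0 // lee_fin.
- by apply: emeasurable_funM => //; exact/measurable_EFinP.
congr (_ * _); rewrite integral_mkcondr; apply: eq_integral => x _.
rewrite patchE indicE.
rewrite [X in if X then _ else _](_ : _ = (V x \in h @^-1` [set h t])) //.
by case: (V x \in _) => /=; rewrite ?mul1e ?mul0e.
Qed.

Lemma integral_comp_approx (phi : T -> \bar R) (mphi : measurable_fun setT phi)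
    (phi0 : forall t, 0 <= phi t) :
  \int[mu]_(x in D) (phi (V x) * (rho x)%:E) =
  limn (fun n => \int[mu]_(x in D)
     ((nnsfun_approx measurableT mphi n (V x))%:E * (rho x)%:E)).
Proof.
rewrite -monotone_convergence //; first last.
- move=> x _ a b ab; rewrite lee_wpmul2r ?lee_fin //.
  exact/lefP/nd_nnsfun_approx.
- by move=> n x _; rewrite mule_ge0 // lee_fin.
- move=> n; apply: emeasurable_funM => //.
  apply/measurable_EFinP; apply: measurableT_comp; last exact: measurable_funTS.
  exact: measurable_funP.
apply: eq_integral => x _; apply/esym/cvg_lim => //; apply: cvgeZr => //.
exact: (@cvg_nnsfun_approx _ _ _ _ measurableT _ mphi (fun t _ => phi0 t) (V x)).
Qed.

End density_transfer.
Arguments integral_nnsfun_comp {d Omega R} mu {dT T V} mV {D} mD {rho} mrho rho0 h.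
Arguments integral_comp_approx {d Omega R} mu {dT T V} mV {D} mD {rho} mrho rho0
  {phi} mphi phi0.

Lemma integral_comp_transfer {d1 d2 dT} {Omega1 : measurableType d1}
    {Omega2 : measurableType d2} {T : measurableType dT} {R : realType}
    (mu1 : {measure set Omega1 -> \bar R}) (mu2 : {measure set Omega2 -> \bar R})
    {V1 : Omega1 -> T} {V2 : Omega2 -> T}
    (mV1 : measurable_fun setT V1) (mV2 : measurable_fun setT V2)
    {D1 : set Omega1} {D2 : set Omega2} (mD1 : measurable D1) (mD2 : measurable D2)
    {rho1 : Omega1 -> R} {rho2 : Omega2 -> R}
    (mrho1 : measurable_fun setT rho1) (mrho2 : measurable_fun setT rho2)
    (rho10 : forall x, 0 <= rho1 x) (rho20 : forall x, 0 <= rho2 x) :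
  (forall B, measurable B ->
    \int[mu1]_(x in D1 `&` V1 @^-1` B) (rho1 x)%:E =
    \int[mu2]_(x in D2 `&` V2 @^-1` B) (rho2 x)%:E)%E ->
  forall phi : T -> \bar R, measurable_fun setT phi -> (forall t, 0 <= phi t)%E ->
  (\int[mu1]_(x in D1) (phi (V1 x) * (rho1 x)%:E) =
   \int[mu2]_(x in D2) (phi (V2 x) * (rho2 x)%:E))%E.
Proof.
move=> same_image phi mphi phi0.
rewrite (integral_comp_approx mu1 mV1 mD1 mrho1 rho10 mphi phi0).
rewrite (integral_comp_approx mu2 mV2 mD2 mrho2 rho20 mphi phi0).
congr (limn _); apply/funext => n.
rewrite (integral_nnsfun_comp mu1 mV1 mD1 mrho1 rho10).
rewrite (integral_nnsfun_comp mu2 mV2 mD2 mrho2 rho20).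
by apply: eq_fsbigr => y _; rewrite same_image //; exact: measurable_funPTI.
Qed.

(* The trace of P on D, pushed forward by W: the (finite) measure
   B |-> P(D /\ W in B).  Conditional probabilities given W within D are
   Radon-Nikodym derivatives with respect to it. *)
Definition trace_image {d dT} {Omega : measurableType d} {T : measurableType dT}
    {R : realType} (P : set Omega -> \bar R) {W : Omega -> T}
    (mW : measurable_fun setT W) {D : set Omega} (mD : measurable D) :
    set T -> \bar R :=
  fun B => P (D `&` W @^-1` B).

Section trace_image.
Context d (Omega : measurableType d) (R : realType)
  (P : {finite_measure set Omega -> \bar R})
  dT (T : measurableType dT) (W : Omega -> T) (mW : measurable_fun setT W)
  (D : set Omega) (mD : measurable D).
Local Open Scope ereal_scope.

Let mDW {B} : measurable B -> measurable (D `&` W @^-1` B).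
Proof. by move=> mB; apply: measurableI => //; rewrite -[_ @^-1` _]setTI; apply: mW. Qed.

Let trace_image0 : trace_image P mW mD set0 = 0.
Proof. by rewrite /trace_image preimage_set0 setI0 measure0. Qed.

Let trace_image_ge0 B : 0 <= trace_image P mW mD B.
Proof. exact: measure_ge0. Qed.

Let trace_image_sigma_additive : semi_sigma_additive (trace_image P mW mD).
Proof.
move=> F mF tF mUF; rewrite /trace_image preimage_bigcup setI_bigcupr.
apply: measure_semi_sigma_additive; first by move=> n; exact: mDW.
- apply/trivIsetP => /= i j _ _ ij; rewrite setIACA -preimage_setI.
  by move/trivIsetP : tF => /(_ _ _ _ _ ij) -> //; rewrite preimage_set0 setI0.
- by rewrite -setI_bigcupr -preimage_bigcup; exact: mDW.
Qed.

HB.instance Definition _ := isMeasure.Build _ _ _ (trace_image P mW mD)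
  trace_image0 trace_image_ge0 trace_image_sigma_additive.

Let trace_image_fin : fin_num_fun (trace_image P mW mD).
Proof. by move=> B mB; rewrite /trace_image fin_num_measure //; exact: mDW. Qed.

HB.instance Definition _ :=
  Measure_isFinite.Build _ _ _ (trace_image P mW mD) trace_image_fin.

Lemma integral_trace_image (phi : T -> \bar R) :
  measurable_fun setT phi -> (forall t, 0 <= phi t) ->
  forall B, measurable B ->
  \int[trace_image P mW mD]_(t in B) phi t =
  \int[P]_(x in D `&` W @^-1` B) phi (W x).
Proof.
move=> mphi phi0 B mB.
transitivity (\int[trace_image P mW mD]_(t in B) (phi (id t) * 1%R%:E)).
  by apply: eq_integral => t _; rewrite mule1.
transitivity (\int[P]_(x in D `&` W @^-1` B) (phi (W x) * 1%R%:E)); last first.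
  by apply: eq_integral => t _; rewrite mule1.
apply: (integral_comp_transfer _ _ (@measurable_id _ _ setT) mW mB (mDW mB)
  (measurable_cst (1 : R)%R) (measurable_cst (1 : R)%R) (fun=> ler01) (fun=> ler01)) => //.
move=> B' mB'; rewrite (eq_integral (cst 1)) // [RHS](eq_integral (cst 1)) //.
rewrite !integral_cst ?mul1e ?measurableI //=.
- by rewrite /trace_image -setIA -preimage_setI.
- by rewrite -setIA -preimage_setI; exact: mDW (measurableI _ _ mB mB').
- exact: measurableI.
Qed.

End trace_image.

Section conditional_probability.
Context d (Omega : measurableType d) (R : realType) (P : probability Omega R)
  dT (T : measurableType dT) (W : Omega -> T) (mW : measurable_fun setT W).
Local Open Scope ereal_scope.

(* A version is the Radon-Nikodym derivative of the trace image of E /\ G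
   with respect to that of E. *)
Lemma cond_prob_version_exists {E G : set Omega} :
  measurable E -> measurable G ->
  exists g : T -> R, (forall t, (0 <= g t)%R) /\ cond_prob_version P E W G g.
Proof.
move=> mE mG; have mEG := measurableI _ _ mE mG.
have mDW (D : set Omega) B : measurable D -> measurable B ->
    measurable (D `&` W @^-1` B).
  by move=> mD mB; apply: measurableI => //; rewrite -[_ @^-1` _]setTI; apply: mW.
have numu : trace_image P mW mEG `<< trace_image P mW mE.
  apply/null_content_dominatesP => B mB muB0; apply/eqP.
  rewrite eq_le measure_ge0 andbT -muB0 /= /trace_image.
  rewrite le_measure ?inE //; [exact: mDW | exact: mDW |].
  by apply: setSI; exact: subIsetl.
pose f := Radon_Nikodym_SigmaFinite.f (trace_image P mW mEG) (trace_image P mW mE).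
have f0 := Radon_Nikodym_SigmaFinite.f_ge0 numu.
have fE t : (fine (f t))%:E = f t.
  by rewrite fineK // Radon_Nikodym_SigmaFinite.f_fin_num.
have mfE : measurable_fun setT f :=
  measurable_int _ (Radon_Nikodym_SigmaFinite.f_integrable numu).
have mf : measurable_fun setT (fun t => fine (f t)).
  by apply: measurableT_comp => //; exact: fine_measurable.
have density B : measurable B ->
    \int[P]_(x in E `&` W @^-1` B) (fine (f (W x)))%:E = trace_image P mW mEG B.
  move=> mB; rewrite (Radon_Nikodym_SigmaFinite.f_integral numu mB).
  rewrite integral_trace_image //.
  by apply: eq_integral => x _; rewrite fE.
exists (fun t => fine (f t)); split; first by move=> t; rewrite fine_ge0.
split; [exact: mf | split; last by move=> B mB; rewrite density].
apply/integrableP; split.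
  exact/measurable_EFinP/(measurableT_comp mf (measurable_funTS mW)).
rewrite -[E]setIT -(preimage_setT W).
under eq_integral => x _ do rewrite gee0_abs ?lee_fin ?fine_ge0 //.
by rewrite density // ltey_eq fin_num_measure // mDW.
Qed.

Lemma cond_prob_version_integral {E G : set Omega} {g : T -> R} :
  measurable E -> measurable G -> (forall t, (0 <= g t)%R) ->
  cond_prob_version P E W G g ->
  forall phi : T -> \bar R, measurable_fun setT phi -> (forall t, 0 <= phi t) ->
  \int[P]_(x in E `&` G) phi (W x) = \int[P]_(x in E) (phi (W x) * (g (W x))%:E).
Proof.
move=> mE mG g0 [mg [_ version]] phi mphi phi0.
have mEG : measurable (E `&` G) by exact: measurableI.
transitivity (\int[P]_(x in E `&` G) (phi (W x) * 1%R%:E)).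
  by apply: eq_integral => x _; rewrite mule1.
apply: (integral_comp_transfer P P mW mW mEG mE (measurable_cst (1 : R)%R)
  (measurableT_comp mg mW) (fun=> ler01) (fun x => g0 (W x))) => // B mB.
rewrite (eq_integral (cst 1)) // integral_cst ?mul1e; first exact: version.
by apply: measurableI => //; rewrite -[_ @^-1` _]setTI; apply: mW.
Qed.

(* By the transfer principle (in the variable Y) it suffices to treat u = 1_C,
   where it is the product rule Pr(Y in C, F | W) = Pr(Y in C | W) Pr(F | W). *)
Lemma cond_indep_integral {V : Type} (E : set Omega) (Y : Omega -> R)
    (Z : Omega -> V) (D : set V) (g : T -> R) :
  measurable E -> measurable_fun setT Y -> measurable (Z @^-1` D) ->
  cond_indep P E W Y Z ->
  (forall t, (0 <= g t)%R) -> cond_prob_version P E W (Z @^-1` D) g ->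
  forall (u : R -> \bar R) (phi : T -> R),
  measurable_fun setT u -> (forall r, 0 <= u r) ->
  measurable_fun setT phi -> (forall t, (0 <= phi t)%R) ->
  \int[P]_(x in E `&` Z @^-1` D) (u (Y x) * (phi (W x))%:E) =
  \int[P]_(x in E) (u (Y x) * (phi (W x) * g (W x))%:E).
Proof.
move=> mE mY mF indep g0 hg u phi mU u0 mphi phi0.
set F := Z @^-1` D.
have mEF : measurable (E `&` F) by exact: measurableI.
have mphiW := measurableT_comp mphi mW.
have mgW := measurableT_comp hg.1 mW.
apply: (integral_comp_transfer P P mY mY mEF mE mphiW (measurable_funM mphiW mgW)
  (fun x => phi0 (W x)) (fun x => mulr_ge0 (phi0 (W x)) (g0 (W x)))) => // C mC.
have mYC : measurable (Y @^-1` C) by rewrite -[_ @^-1` _]setTI; apply: mY.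
have mYCF : measurable (Y @^-1` C `&` F) by exact: measurableI.
have [f [f0 hf]] := cond_prob_version_exists mE mYC.
have [h [h0 hh]] := cond_prob_version_exists mE mYCF.
have mphiE : measurable_fun setT (fun t => (phi t)%:E) by exact/measurable_EFinP.
have phiE0 t : 0 <= (phi t)%:E by rewrite lee_fin.
have product_rule : {ae P, forall x, E x -> h (W x) = (f (W x) * g (W x))%R}.
  exact: indep C D mYC mF f g h hf hg hh.
rewrite -setIA (setIC F) (cond_prob_version_integral mE mYCF h0 hh _ mphiE phiE0).
transitivity (\int[P]_(x in E) ((phi (W x))%:E * (f (W x) * g (W x))%:E)).
  apply: ae_eq_integral => //.
  - by apply: emeasurable_funM; apply/measurable_EFinP/measurable_funTS;
      [exact: mphiW | exact: measurableT_comp hh.1 mW].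
  - apply: emeasurable_funM; apply/measurable_EFinP/measurable_funTS => //.
    exact: measurable_funM (measurableT_comp hf.1 mW) mgW.
  - by apply: filterS product_rule => x hx Ex; rewrite hx.
have mphig : measurable_fun setT (fun t => (phi t * g t)%:E).
  exact/measurable_EFinP/(measurable_funM mphi hg.1).
rewrite (cond_prob_version_integral mE mYC f0 hf _ mphig); last first.
  by move=> t; rewrite lee_fin mulr_ge0.
by apply: eq_integral => x _; rewrite -!EFinM /= (mulrC (f (W x))) mulrA.
Qed.

End conditional_probability.
Arguments cond_indep_integral {d Omega R} P {dT T W} mW {V E Y Z D g}.

(* From nonnegative test functions to an integrable real variable: if
   E[1{D1} u(Y) Q] = E[1{D2} u(Y)] for every nonnegative measurable u, then
   Y Q is integrable on D1 whenever Y is integrable on D2 (take u = |.|), and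
   E[1{D1} Y Q] = E[1{D2} Y] (take the positive and negative parts). *)
Section weighted_integral.
Context d (Omega : measurableType d) (R : realType)
  (mu : {measure set Omega -> \bar R}) (D1 D2 : set Omega)
  (Y Q : Omega -> R) (mY : measurable_fun setT Y) (mQ : measurable_fun setT Q)
  (Q0 : forall x, 0 <= Q x).
Local Open Scope ereal_scope.
Hypothesis weighted_eq : forall u : R -> \bar R,
  measurable_fun setT u -> (forall r, 0 <= u r) ->
  \int[mu]_(x in D1) (u (Y x) * (Q x)%:E) = \int[mu]_(x in D2) u (Y x).

Lemma weighted_integrable :
  mu.-integrable D2 (fun x => (Y x)%:E) ->
  mu.-integrable D1 (fun x => (Y x * Q x)%:E).
Proof.
move=> /integrableP[_ intY]; apply/integrableP; split.
  exact/measurable_EFinP/measurable_funTS/measurable_funM.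
under eq_integral => x _ do rewrite abse_EFin normrM (ger0_norm (Q0 x)) EFinM.
have mnorm : measurable_fun setT (fun r : R => `|r|%:E).
  by apply/measurable_EFinP; exact: normr_measurable.
by rewrite (weighted_eq _ mnorm) // => r; rewrite lee_fin.
Qed.

Lemma weighted_integral_eq :
  \int[mu]_(x in D1) (Y x * Q x)%:E = \int[mu]_(x in D2) (Y x)%:E.
Proof.
have max0_ge0 (r : R) : 0 <= (Num.max r 0)%:E by rewrite lee_fin le_max lexx orbT.
have mmax0 (f : R -> R) : measurable_fun setT f ->
    measurable_fun setT (fun r => (Num.max (f r) 0)%:E).
  by move=> mf; apply/measurable_EFinP/measurable_maxr => //; exact: measurable_cst.
rewrite integralE [RHS]integralE; congr (_ - _).
- transitivity (\int[mu]_(x in D1) ((Num.max (Y x) 0)%:E * (Q x)%:E)).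
    apply: eq_integral => x _.
    by rewrite funeposE -EFin_max -EFinM maxr_pMl // mul0r.
  rewrite (weighted_eq _ (mmax0 _ (@measurable_id _ _ setT))) //.
  by apply: eq_integral => x _; rewrite funeposE -EFin_max.
- transitivity (\int[mu]_(x in D1) ((Num.max (- Y x) 0)%:E * (Q x)%:E)).
    apply: eq_integral => x _.
    by rewrite funenegE -EFin_max -EFinM maxr_pMl // mul0r mulNr.
  rewrite (weighted_eq _ (mmax0 _ (@oppr_measurable _ setT))) //.
  by apply: eq_integral => x _; rewrite funenegE -EFin_max.
Qed.

End weighted_integral.
Arguments weighted_integrable {d Omega R mu D1 D2 Y Q}.
Arguments weighted_integral_eq {d Omega R mu D1 D2 Y Q}.

Lemma measurable_fun_inv_pos {dT} {T : measurableType dT} {R : realType}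
    {f : T -> R} :
  measurable_fun setT f -> (forall t, 0 < f t) ->
  measurable_fun setT (fun t => (f t)^-1).
Proof.
move=> mf f_gt0.
have -> : (fun t => (f t)^-1) = (fun t => expR (- ln (f t))).
  by apply/funext => t; rewrite expRN lnK // posrE.
apply: measurableT_comp; first exact: measurable_expR.
apply: measurableT_comp; first exact: oppr_measurable.
by apply: measurableT_comp; first exact: measurable_ln.
Qed.

Section inverse_probability_weighting.
Context d dP dS (R : realType) (Omega : measurableType d)
  (P : probability Omega R) (TP : measurableType dP) (TS : measurableType dS)
  (Y : Omega -> R) (S : Omega -> bool) (A : Omega -> nat)
  (XP : Omega -> TP) (XS : Omega -> TS) (pi_j : TP -> R) (p : TP * TS -> R)
  (j : nat).
Hypotheses (mY : measurable_fun setT Y) (mS : measurable (S @^-1` [set true]))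
  (mAj : measurable (A @^-1` [set j]))
  (mXP : measurable_fun setT XP) (mXS : measurable_fun setT XS).
Hypotheses (sampling_ignorability : cond_indep P (A @^-1` [set j]) XP Y S)
  (pi_version :
     cond_prob_version P (A @^-1` [set j]) XP (S @^-1` [set true]) pi_j)
  (pi_gt0 : forall x, 0 < pi_j x).
Hypotheses (area_ignorability :
     cond_indep P (S @^-1` [set true]) (fun w => (XP w, XS w)) Y A)
  (p_version : cond_prob_version P (S @^-1` [set true])
     (fun w => (XP w, XS w)) (A @^-1` [set j]) p)
  (p_ge0 : forall x, 0 <= p x).

Definition ipw_weight (w : Omega) : R := (pi_j (XP w))^-1 * p (XP w, XS w).

Lemma ipw_weight_ge0 w : 0 <= ipw_weight w.
Proof. by rewrite mulr_ge0 // invr_ge0 ltW. Qed.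

Lemma measurable_ipw_weight : measurable_fun setT ipw_weight.
Proof.
apply: measurable_funM.
  exact: measurableT_comp (measurable_fun_inv_pos pi_version.1 pi_gt0) mXP.
exact: measurableT_comp p_version.1 (measurable_fun_pair mXP mXS).
Qed.

(* Area ignorability
   turns the weight p_j into the indicator of A = j, then sampling
   ignorability turns 1{S = 1} into pi_j, which cancels with 1 / pi_j. *)
Lemma ipw_identity (u : R -> \bar R) :
  measurable_fun setT u -> (forall r, (0 <= u r)%E) ->
  (\int[P]_(x in S @^-1` [set true]) (u (Y x) * (ipw_weight x)%:E) =
   \int[P]_(x in A @^-1` [set j]) u (Y x))%E.
Proof.
move=> mU u0.
have mpiV := measurable_fun_inv_pos pi_version.1 pi_gt0.
have piV0 t : 0 <= (pi_j t)^-1 by rewrite invr_ge0 ltW.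
have area := cond_indep_integral P (measurable_fun_pair mXP mXS) mS mY mAj
  area_ignorability p_ge0 p_version u (fun t => (pi_j t.1)^-1) mU u0
  (measurableT_comp mpiV measurable_fst) (fun t => piV0 t.1).
have sampling := cond_indep_integral P mXP mAj mY mS sampling_ignorability
  (fun t => ltW (pi_gt0 t)) pi_version u (fun t => (pi_j t)^-1) mU u0 mpiV piV0.
rewrite -[LHS]area setIC sampling; apply: eq_integral => x _.
by rewrite mulVf ?mule1 // gt_eqF.
Qed.

Lemma ipw_scaled_mean (c : R) :
  P.-integrable (A @^-1` [set j]) (fun w => (Y w)%:E) ->
  ((\int[P]_(w in A @^-1` [set j]) (Y w)%:E) * c%:E =
   \int[P]_(w in S @^-1` [set true]) (c * (Y w * ipw_weight w))%:E)%E.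
Proof.
move=> intY.
have intYQ := weighted_integrable mY measurable_ipw_weight ipw_weight_ge0
  ipw_identity intY.
rewrite -(weighted_integral_eq ipw_weight_ge0 ipw_identity) muleC.
by under [RHS]eq_integral do rewrite EFinM; rewrite integralZl.
Qed.

End inverse_probability_weighting.
Arguments ipw_weight {d dP dS R Omega TP TS} XP XS pi_j p w.
Arguments measurable_ipw_weight {d dP dS R Omega P TP TS S A XP XS pi_j p j}.
Arguments ipw_scaled_mean {d dP dS R Omega P TP TS Y S A XP XS pi_j p j}.

Lemma integral_indic_split {d} {Omega : measurableType d} {R : realType}
    (mu : {measure set Omega -> \bar R}) {D F : set Omega} {f : Omega -> R} :
  measurable D -> measurable F -> measurable_fun setT f ->
  (\int[mu]_x (\1_(D `&` F) x * f x)%:E +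
   \int[mu]_x (\1_(D `&` ~` F) x * f x)%:E = \int[mu]_(x in D) (f x)%:E)%E.
Proof.
move=> mD mF mf.
have indic G : (\int[mu]_x (\1_G x * f x)%:E = \int[mu]_(x in G) (f x)%:E)%E.
  rewrite [RHS]integral_mkcond; apply: eq_integral => x _.
  by rewrite patchE indicE; case: (x \in G); rewrite ?mul1r ?mul0r.
rewrite !indic -integral_setU.
- by rewrite -setIUr setUCr setIT.
- exact: measurableI.
- by apply: measurableI => //; exact: measurableC.
- exact/measurable_EFinP/measurable_funTS.
- by apply/disj_set2P; rewrite setIACA setICr setI0.
Qed.



Theorem corollary1 {d dP dS : measure_display} (R : realType)
  (Omega : measurableType d) (P : probability Omega R)
  (TP : measurableType dP) (TS : measurableType dS) (J : nat)
  (Y : Omega -> R) (S : Omega -> bool) (A : Omega -> nat)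
  (XP : Omega -> TP) (XS : Omega -> TS)
  (pi : nat -> TP -> R) (p : TP * TS -> R) (j : nat) :
  (* random variables *)
  measurable_fun setT Y ->
  P.-integrable setT (fun w => (Y w)%:E) ->
  measurable (S @^-1` [set true]) ->
  (forall a, measurable (A @^-1` [set a])) ->
  (forall w, (1 <= A w <= J)%N) ->
  measurable_fun setT XP ->
  measurable_fun setT XS ->
  (* the fixed area j *)
  (1 <= j <= J)%N ->
  (0 < P (A @^-1` [set j]))%E ->
  (* sampling ignorability *)
  (forall a, (1 <= a <= J)%N ->
     cond_indep P (A @^-1` [set a]) XP Y S) ->
  (forall a, (1 <= a <= J)%N ->
     cond_prob_version P (A @^-1` [set a]) XP (S @^-1` [set true]) (pi a)) ->
  (forall a x, (1 <= a <= J)%N -> 0 < pi a x < 1) ->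
  (* area ignorability *)
  cond_indep P (S @^-1` [set true]) (fun w => (XP w, XS w)) Y A ->
  cond_prob_version P (S @^-1` [set true]) (fun w => (XP w, XS w))
    (A @^-1` [set j]) p ->
  (forall x, 0 < p x < 1) ->
  let pAj := fine (P (A @^-1` [set j])) in
  let piX := fun w => pi j (XP w) in
  let pX := fun w => p (XP w, XS w) in
  ((\int[P]_(w in A @^-1` [set j]) (Y w)%:E) * (pAj^-1)%:E =
   (\int[P]_w ((S w && (A w == j))%:R / pAj * (Y w / piX w) * pX w)%:E) +
   (\int[P]_w ((S w && (A w != j))%:R / pAj * (pX w / (1 - pX w))
                 * (Y w / piX w) * (1 - pX w))%:E))%E.
Proof.
move=> mY iY mS mA _ mXP mXS hj pAj_gt0 sampling pi_version pi_bd area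
  p_version p_bd pAj piX pX.
have pi_gt0 t : 0 < pi j t by case/andP: (pi_bd j t hj).
have p_gt0 t : 0 < p t by case/andP: (p_bd t).
have p_neq1 t : 1 - p t != 0 by rewrite subr_eq0 eq_sym lt_eqF //; case/andP: (p_bd t).
have pAj_neq0 : pAj != 0.
  rewrite gt_eqF // fine_gt0 // pAj_gt0 /=.
  exact: le_lt_trans (probability_le1 P (mA j)) (ltry 1).
rewrite (ipw_scaled_mean mY mS (mA j) mXP mXS (sampling j hj) (pi_version j hj)
  pi_gt0 area p_version (fun t => ltW (p_gt0 t)));
  last exact: integrableS measurableT (mA j) (subsetT _) iY.
have mYQ : measurable_fun setT
    (fun w => pAj^-1 * (Y w * ipw_weight XP XS (pi j) p w)).
  apply: measurable_funM; first exact: measurable_cst.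
  apply: measurable_funM => //.
  exact: measurable_ipw_weight mXP mXS (pi_version j hj) pi_gt0 p_version.
have inS w : (w \in S @^-1` [set true]) = S w.
  by apply/idP/idP => [/set_mem //|]; exact: mem_set.
have inA w : (w \in A @^-1` [set j]) = (A w == j).
  by apply/idP/idP => [/set_mem /= ->//|/eqP]; exact: mem_set.
rewrite -(integral_indic_split _ mS (mA j) mYQ); congr (_ + _)%E;
  apply: eq_integral => w _; congr (_%:E);
  rewrite indicE in_setI ?in_setC inS inA /ipw_weight /piX /pX;
  case: (S w); case: (A w == j); rewrite /= ?mul0r ?mul1r //.
- by rewrite !mulrA.
- by field; rewrite gt_eqF // p_neq1 pAj_neq0.
Qed.
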